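(* Let $(S,d)$ and $(S',d')$ be Polish spaces and let $g:S'\times S\to\mathbb{R}$ be a (Borel measurable) map that is $K$-Lipschitz in the second variable, i.e. $|g(x,y)-g(x,z)|\le K\,d(y,z)$ for all $x\in S'$, $y,z\in S$. Let $X$ be an $S'$-valued random variable and $Y,Z$ be $S$-valued random variables with $X$ independent of $Y$ and $X$ independent of $Z$, and suppose the cumulative distribution function of $g(X,Y)$ is Lipschitz with constant $L$. Then for all $x\in\mathbb{R}$, $|\mathbb{P}(g(X,Y)\le x)-\mathbb{P}(g(X,Z)\le x)|\le(1+L)(1\vee K)\,\rho_P^S(Y,Z)$.
   Context: For a Polish space $(S,d)$ and $\mu,\nu\in\mathcal{P}(S)$, the Prokhorov distance is $\rho_P^S(\mu,\nu)=\inf\{\epsilon>0:\mu(B)\le\nu(B^\epsilon)+\epsilon\text{ for all Borel sets }B\}$, where $B^\epsilon=\{x\in S:d(x,B)<\epsilon\}$; for $S$-valued random variables $U,V$, $\rho_P^S(U,V)=\rho_P^S(\operatorname{law}(U),\operatorname{law}(V))$. $a\vee b=\max(a,b)$. *)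

From HB Require Import structures.
From mathcomp Require Import all_boot all_order all_algebra.
From mathcomp Require Import all_classical all_reals all_analysis.
Set Implicit Arguments. Unset Strict Implicit. Unset Printing Implicit Defensive.
Import Order.TTheory GRing.Theory Num.Theory.
Local Open Scope classical_set_scope.
Local Open Scope ring_scope.

Section Defs.
Variable R : realType.

Definition cauchy_seq (S : Type) (d : S -> S -> R) (u : nat -> S) : Prop :=
  forall e : R, 0 < e -> exists N : nat, forall m n : nat,
    (N <= m)%N -> (N <= n)%N -> d (u m) (u n) < e.

Definition converges_to (S : Type) (d : S -> S -> R) (u : nat -> S) (l : S) :=
  forall e : R, 0 < e -> exists N : nat, forall n : nat, (N <= n)%N -> d (u n) l < e.

Definition polish_space (S : Type) (d : S -> S -> R) : Prop :=
  (forall x y, 0 <= d x y) /\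
  (forall x y, d x y = 0 <-> x = y) /\
  (forall x y, d x y = d y x) /\
  (forall x y z, d x z <= d x y + d y z) /\
  (forall u, cauchy_seq d u -> exists l, converges_to d u l) /\
  (exists u : nat -> S, forall x (e : R), 0 < e -> exists n, d x (u n) < e).

Definition metric_open (S : Type) (d : S -> S -> R) (O : set S) : Prop :=
  forall x, O x -> exists2 e : R, 0 < e & forall y, d x y < e -> O y.

Definition borel (S : Type) (d : S -> S -> R) : set (set S) :=
  smallest (sigma_algebra setT) (metric_open d).

Definition borel_prod (S' S : Type) (d' : S' -> S' -> R) (d : S -> S -> R)
  : set (set (S' * S)) :=
  smallest (sigma_algebra setT) [set A `*` B | A in borel d' & B in borel d].

Definition enlarge (S : Type) (d : S -> S -> R) (B : set S) (eps : R) : set S :=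
  [set x | exists2 b, B b & d x b < eps].

Section Prob.
Context {dT : measure_display} {T : measurableType dT} (P : probability T R).

Definition random_var (S : Type) (d : S -> S -> R) (X : T -> S) : Prop :=
  forall B, borel d B -> measurable (X @^-1` B).

Definition indep_rv (S' S : Type) (d' : S' -> S' -> R) (d : S -> S -> R)
  (X : T -> S') (Y : T -> S) : Prop :=
  forall A B, borel d' A -> borel d B ->
    P (X @^-1` A `&` Y @^-1` B) = (P (X @^-1` A) * P (Y @^-1` B))%E.

Definition prokhorov (S : Type) (d : S -> S -> R) (Y Z : T -> S) : R :=
  inf [set eps : R | 0 < eps /\ forall B, borel d B ->
        (P (Y @^-1` B) <= P (Z @^-1` enlarge d B eps) + eps%:E)%E].

End Prob.
End Defs.

From HB Require Import structures.
From mathcomp Require Import all_boot all_order all_algebra.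
From mathcomp Require Import all_classical all_reals all_analysis.
From mathcomp Require Import measurable_realfun lra.
Import Order.TTheory GRing.Theory Num.Theory.
Local Open Scope classical_set_scope.
Local Open Scope ring_scope.

(* Independence of X and W gives P((X, W) \in C) = E[P(W \in C_x)]_{x = X} for
   every product-measurable C: the sets satisfying this Fubini identity contain
   the measurable rectangles and form a lambda-system, so Dynkin's pi-lambda
   theorem applies.  If P(Y \in B) <= P(Z \in B^e) + e for all Borel B, the
   K-Lipschitz bound on g(x, .) puts the e-enlargement of {y | g(x,y) <= t - K e}
   inside {z | g(x,z) <= t}; integrating over x = X gives
   P(g(X,Y) <= t - K e) <= P(g(X,Z) <= t) + e, and the same with Y and Z
   exchanged since the Prokhorov condition is symmetric.  The L-Lipschitz cdf
   of g(X,Y) absorbs the shifts by K e, so the cdfs differ by at most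
   (1 + L) K e; K is replaced by max 1 K so that e <= K e, and one takes the
   infimum over e. *)

Section smallest_sigma_algebra_closure.
Context {U : Type} {G : set (set U)}.

Let smallest_sigmaP :=
  (sigma_algebraP (fun A _ => @subsetT U A)).1 (smallest_sigma_algebra setT G).

Lemma smallest_sigmaT : <<s G >> setT.
Proof. by case: smallest_sigmaP. Qed.

Lemma smallest_sigmaI : setI_closed <<s G >>.
Proof. by case: smallest_sigmaP. Qed.

Lemma smallest_sigmaC A : <<s G >> A -> <<s G >> (~` A).
Proof. by rewrite -setTD; exact: sigma_algebraCD. Qed.

Lemma smallest_sigmaD A B : <<s G >> A -> <<s G >> B -> <<s G >> (A `\` B).
Proof.
by move=> GA GB; rewrite setDE; apply: smallest_sigmaI => //; exact: smallest_sigmaC.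
Qed.

End smallest_sigma_algebra_closure.

Lemma probability_setD_sub (R : realType) (dT : measure_display)
    (T : measurableType dT) (P : probability T R) (A B : set T) :
  measurable A -> measurable B -> B `<=` A -> P (A `\` B) = (P A - P B)%E.
Proof.
move=> mA mB BA; rewrite measureD ?setIidr //.
by apply: (le_lt_trans (probability_le1 P mA)); exact: ltry.
Qed.

Lemma fine_probability_leD (R : realType) (dT : measure_display)
    (T : measurableType dT) (P : probability T R) (A B : set T) (e : R) :
  measurable A -> measurable B -> (P A <= P B + e%:E)%E ->
  fine (P A) <= fine (P B) + e.
Proof.
move=> mA mB; rewrite -(fineK (fin_num_measure P _ mA)).
by rewrite -(fineK (fin_num_measure P _ mB)) -EFinD lee_fin.
Qed.

Arguments fine_probability_leD {R dT T P A B e}.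

Section independent_fubini.
Context (R : realType) (dT : measure_display) (T : measurableType dT)
  (P : probability T R) (S' S : Type) (d' : S' -> S' -> R) (d : S -> S -> R)
  (X : T -> S') (W : T -> S).
Hypotheses (hX : random_var d' X) (hW : random_var d W)
  (indXW : indep_rv P d' d X W).

Let XW (w : T) : S' * S := (X w, W w).

Definition section_prob (C : set (S' * S)) (w : T) : \bar R :=
  P (W @^-1` xsection C (X w)).

Definition indep_fubini (C : set (S' * S)) : Prop :=
  [/\ measurable (XW @^-1` C), (forall x, borel d (xsection C x)),
      measurable_fun setT (section_prob C) &
      P (XW @^-1` C) = (\int[P]_w section_prob C w)%E].

Lemma indep_fubini_integrable C :
  indep_fubini C -> P.-integrable setT (section_prob C).
Proof.
case=> _ bC mC _; apply/integrableP; split => //.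
apply: (@le_lt_trans _ _ (\int[P]_w (cst 1%E w))%E).
  apply: ge0_le_integral => //; first exact: measurableT_comp.
  move=> w _; rewrite gee0_abs ?measure_ge0 //.
  by apply: probability_le1; exact: hW.
rewrite integral_cst // mul1e.
by apply: (le_lt_trans (probability_le1 P measurableT)); exact: ltry.
Qed.

Lemma indep_fubini_setX A B : borel d' A -> borel d B -> indep_fubini (A `*` B).
Proof.
move=> bA bB; have mXA := hX _ bA; have mWB := hW _ bB.
have probE : section_prob (A `*` B) =
    fun w => (fine (P (W @^-1` B)) * \1_(X @^-1` A) w)%:E.
  apply/funext => w; rewrite /section_prob indicE.
  have [XwA|XwA] := boolP (w \in X @^-1` A).
    rewrite in_xsectionX; last by rewrite inE; rewrite inE in XwA.
    by rewrite mulr1 fineK ?fin_num_measure.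
  by rewrite notin_xsectionX ?mulr0 ?measure0.
split.
- exact: measurableI.
- move=> x; have [xA|xA] := boolP (x \in A).
    by rewrite in_xsectionX.
  by rewrite notin_xsectionX //; exact: sigma_algebra0.
- by rewrite probE; apply/measurable_EFinP; apply: measurable_funM.
- rewrite probE (@integralZl_indic _ _ _ _ _ _ (fun _ => X @^-1` A)) //; last first.
    by move=> /lt_geF; rewrite fine_ge0 ?measure_ge0.
  by rewrite integral_indic // setIT fineK ?fin_num_measure // muleC; exact: indXW.
Qed.

Lemma indep_fubini_setT : indep_fubini setT.
Proof.
have xsectionT x : xsection [set: S' * S] x = setT.
  by apply/seteqP; split => y //= _; rewrite /xsection /= in_setT.
have probT : section_prob setT = cst 1%E.
  by apply/funext => w; rewrite /section_prob xsectionT; exact: probability_setT.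
split.
- by rewrite preimage_setT.
- by move=> x; rewrite xsectionT; exact: smallest_sigmaT.
- by rewrite probT.
- by rewrite probT integral_cst // mul1e preimage_setT.
Qed.

Lemma indep_fubini_setD A B : B `<=` A ->
  indep_fubini A -> indep_fubini B -> indep_fubini (A `\` B).
Proof.
move=> BA fA fB; have iA := indep_fubini_integrable _ fA.
have iB := indep_fubini_integrable _ fB.
case: fA fB => mA bA mpA eA [mB bB mpB eB].
have probD : section_prob (A `\` B) = (section_prob A \- section_prob B)%E.
  apply/funext => w; rewrite /section_prob xsectionD probability_setD_sub //.
  - exact: hW.
  - exact: hW.
  - by apply: preimage_subset; exact: le_xsection.
split.
- exact: measurableD.
- by move=> x; rewrite xsectionD; apply: smallest_sigmaD; [exact: bA | exact: bB].
- by rewrite probD; exact: emeasurable_funB.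
- rewrite probD integralB // -eA -eB -probability_setD_sub //.
  exact: preimage_subset.
Qed.

Lemma section_prob_bigcup_cvg F : nondecreasing_seq F ->
  (forall n, indep_fubini (F n)) ->
  forall w, section_prob (F n) w @[n --> \oo] --> section_prob (\bigcup_n F n) w.
Proof.
move=> ndF fF w; rewrite /section_prob xsection_bigcup preimage_bigcup.
have mF n : measurable (W @^-1` xsection (F n) (X w)) by apply: hW; case: (fF n).
apply: nondecreasing_cvg_mu => //; first exact: bigcupT_measurable.
move=> n m /ndF; rewrite !subsetEset => subF.
by apply: preimage_subset; exact: le_xsection.
Qed.

Lemma indep_fubini_ndseq F : nondecreasing_seq F ->
  (forall n, indep_fubini (F n)) -> indep_fubini (\bigcup_n F n).
Proof.
move=> ndF fF; have cvgF := section_prob_bigcup_cvg F ndF fF.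
have subF n m : (n <= m)%N -> F n `<=` F m by move=> /ndF; rewrite subsetEset.
have mF n : measurable (XW @^-1` F n) by case: (fF n).
have mpF n : measurable_fun setT (section_prob (F n)) by case: (fF n).
split.
- by rewrite preimage_bigcup; exact: bigcupT_measurable.
- move=> x; rewrite xsection_bigcup; apply: sigma_algebra_bigcup => n.
  by case: (fF n) => _ + _ _; apply.
- by apply: (emeasurable_fun_cvg _ _ mpF) => w _; exact: cvgF.
have cvgP : P (XW @^-1` F n) @[n --> \oo] --> P (XW @^-1` \bigcup_n F n).
  rewrite preimage_bigcup; apply: nondecreasing_cvg_mu => //.
    exact: bigcupT_measurable.
  by move=> n m /subF; rewrite subsetEset; exact: preimage_subset.
have cvgI : (\int[P]_w section_prob (F n) w)%E @[n --> \oo] -->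
            (\int[P]_w section_prob (\bigcup_n F n) w)%E.
  have limE : (fun w => limn (fun n => section_prob (F n) w)) =
              section_prob (\bigcup_n F n).
    by apply/funext => w; apply: cvg_lim => //; exact: cvgF.
  rewrite -limE; apply: cvg_monotone_convergence => //.
  move=> w _ n m nm; apply: le_measure; rewrite ?inE.
  - by apply: hW; case: (fF n).
  - by apply: hW; case: (fF m).
  - by apply: preimage_subset; apply: le_xsection; exact: subF.
have eqF : (fun n => P (XW @^-1` F n)) = (fun n => \int[P]_w section_prob (F n) w)%E.
  by apply/funext => n; case: (fF n).
by rewrite eqF in cvgP; exact: cvg_unique cvgP cvgI.
Qed.

Lemma borel_prod_indep_fubini C : borel_prod d' d C -> indep_fubini C.
Proof.
have setI_rect : setI_closed [set A `*` B | A in borel d' & B in borel d].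
  move=> _ _ [A bA [B bB <-]] [A' bA' [B' bB' <-]].
  exists (A `&` A'); first exact: smallest_sigmaI.
  by exists (B `&` B'); [exact: smallest_sigmaI | rewrite setXI].
apply: (lambda_system_subset setI_rect) => //.
- split => //.
  + exact: indep_fubini_setT.
  + exact: indep_fubini_setD.
  + exact: indep_fubini_ndseq.
- by move=> _ [A bA [B bB <-]]; exact: indep_fubini_setX.
Qed.

End independent_fubini.

Arguments borel_prod_indep_fubini {R dT T P S' S d' d X W}.

Section enlargement.
Context {R : realType} {S : Type} {d : S -> S -> R}.
Hypotheses (dsym : forall x y, d x y = d y x)
  (dtri : forall x y z, d x z <= d x y + d y z).

Lemma metric_open_enlarge B e : metric_open d (enlarge d B e).
Proof.
move=> x [b Bb xb]; exists (e - d x b); first by rewrite subr_gt0.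
move=> y xy; exists b => //; apply: (le_lt_trans (dtri y x b)).
by rewrite dsym -ltrBrDr.
Qed.

Lemma borel_enlarge B e : borel d (enlarge d B e).
Proof. by apply: sub_sigma_algebra; exact: metric_open_enlarge. Qed.

Lemma enlarge_setC_enlarge B e : enlarge d (~` enlarge d B e) e `<=` ~` B.
Proof. by move=> z [a aNE za] Bz; apply: aNE; exists z; rewrite // dsym. Qed.

End enlargement.

Definition prokhorov_bound {R : realType} {dT : measure_display}
    {T : measurableType dT} (P : probability T R) {S : Type} (d : S -> S -> R)
    (Y Z : T -> S) (e : R) : Prop :=
  forall B, borel d B -> (P (Y @^-1` B) <= P (Z @^-1` enlarge d B e) + e%:E)%E.

Section prokhorov_bound.
Context (R : realType) (dT : measure_display) (T : measurableType dT)
  (P : probability T R) (S : Type) (d : S -> S -> R) (Y Z : T -> S).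
Hypotheses (hY : random_var d Y) (hZ : random_var d Z).

Lemma prokhorov_bound_sym e :
  (forall x y, d x y = d y x) -> (forall x y z, d x z <= d x y + d y z) ->
  prokhorov_bound P d Y Z e -> prokhorov_bound P d Z Y e.
Proof.
move=> dsym dtri bYZ B bB.
have bE := borel_enlarge dsym dtri B e.
have mYE := hY _ bE; have mZB := hZ _ bB.
have : (P (Y @^-1` ~` enlarge d B e) <= P (Z @^-1` ~` B) + e%:E)%E.
  apply: (le_trans (bYZ _ (smallest_sigmaC _ bE))); rewrite leeD2r //.
  apply: le_measure; rewrite ?inE.
  - by apply: hZ; exact: borel_enlarge.
  - by apply: hZ; apply: smallest_sigmaC.
  - by apply: preimage_subset; exact: enlarge_setC_enlarge.
rewrite -!preimage_setC !probability_setC //.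
rewrite -(fineK (fin_num_measure P _ mYE)) -(fineK (fin_num_measure P _ mZB)).
by rewrite -!EFinB -!EFinD !lee_fin; lra.
Qed.

Lemma prokhorov_ge (c k : R) : 0 < k ->
  (forall e, 0 < e -> prokhorov_bound P d Y Z e -> c <= k * e) ->
  c <= k * prokhorov P d Y Z.
Proof.
move=> k0 ub; rewrite -ler_pdivrMl //; apply: lb_le_inf.
  exists 1; split => // B bB; apply: (le_trans (probability_le1 P (hY _ bB))).
  by apply: leeDr; exact: measure_ge0.
by move=> e [e0 be]; rewrite ler_pdivrMl //; exact: ub.
Qed.

End prokhorov_bound.

Arguments prokhorov_bound_sym {R dT T P S d Y Z} hY hZ {e}.
Arguments prokhorov_ge {R dT T P S d Y Z} hY c k.

Section lipschitz_shift.
Context (R : realType) (dT : measure_display) (T : measurableType dT)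
  (P : probability T R) (S' S : Type) (d' : S' -> S' -> R) (d : S -> S -> R)
  (g : S' * S -> R) (K : R).
Hypotheses (g_meas : forall B : set R, measurable B -> borel_prod d' d (g @^-1` B))
  (K0 : 0 <= K) (g_lip : forall x y z, `|g (x, y) - g (x, z)| <= K * d y z)
  (dsym : forall x y, d x y = d y x)
  (dtri : forall x y z, d x z <= d x y + d y z).
Variable X : T -> S'.
Hypothesis hX : random_var d' X.

Lemma borel_prod_le r : borel_prod d' d [set p | g p <= r].
Proof.
have -> : [set p | g p <= r] = g @^-1` `]-oo, r].
  by apply/seteqP; split => p /=; rewrite in_itv.
by apply: g_meas; exact: measurable_itv.
Qed.

Lemma measurable_le_event (W : T -> S) r :
  random_var d W -> indep_rv P d' d X W -> measurable [set w | g (X w, W w) <= r].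
Proof.
by move=> hW indXW; case: (borel_prod_indep_fubini hX hW indXW _ (borel_prod_le r)).
Qed.

Lemma enlarge_xsection_le x t e :
  enlarge d (xsection [set p | g p <= t - K * e] x) e `<=` xsection [set p | g p <= t] x.
Proof.
move=> z [b]; rewrite /xsection /= !inE /= => gb zb.
have : g (x, z) - g (x, b) <= K * e.
  apply: le_trans (ler_norm _) (le_trans (g_lip x z b) _).
  by rewrite ler_wpM2l // ltW.
lra.
Qed.

Lemma prob_le_shift (W1 W2 : T -> S) t e :
  random_var d W1 -> random_var d W2 ->
  indep_rv P d' d X W1 -> indep_rv P d' d X W2 ->
  0 <= e -> prokhorov_bound P d W1 W2 e ->
  (P [set w | (g (X w, W1 w) <= t - K * e)%R] <=
   P [set w | (g (X w, W2 w) <= t)%R] + e%:E)%E.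
Proof.
move=> hW1 hW2 ind1 ind2 e0 bW.
have [_ sec1 mp1 ->] :=
  borel_prod_indep_fubini hX hW1 ind1 _ (borel_prod_le (t - K * e)).
have [_ sec2 mp2 ->] := borel_prod_indep_fubini hX hW2 ind2 _ (borel_prod_le t).
have -> : e%:E = (\int[P]_w cst e%:E w)%E.
  by rewrite integral_cst // [X in (_ * X)%E]probability_setT mule1.
rewrite -ge0_integralD //.
apply: ge0_le_integral => //; first by apply: emeasurable_funD.
move=> w _; apply: (le_trans (bW _ (sec1 (X w)))); rewrite leeD2r //.
apply: le_measure; rewrite ?inE.
- by apply: hW2; exact: borel_enlarge.
- exact: hW2.
- by apply: preimage_subset; exact: enlarge_xsection_le.
Qed.

End lipschitz_shift.

Arguments measurable_le_event {R dT T P S' S d' d g} g_meas {X} hX {W} r.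
Arguments prob_le_shift {R dT T P S' S d' d g K} g_meas K0 g_lip dsym dtri {X} hX
  {W1 W2} t {e}.

Section cdf_gap.
Context (R : realType) (dT : measure_display) (T : measurableType dT)
  (P : probability T R) (S' S : Type) (d' : S' -> S' -> R) (d : S -> S -> R)
  (g : S' * S -> R) (K : R).
Hypotheses (g_meas : forall B : set R, measurable B -> borel_prod d' d (g @^-1` B))
  (K1 : 1 <= K) (g_lip : forall x y z, `|g (x, y) - g (x, z)| <= K * d y z)
  (dsym : forall x y, d x y = d y x)
  (dtri : forall x y z, d x z <= d x y + d y z).
Variable X : T -> S'.
Hypothesis hX : random_var d' X.

Lemma cdf_gap_le (Y Z : T -> S) (L x e : R) :
  random_var d Y -> random_var d Z -> indep_rv P d' d X Y -> indep_rv P d' d X Z ->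
  (forall s t, `|fine (P [set w | g (X w, Y w) <= s]) -
                 fine (P [set w | g (X w, Y w) <= t])| <= L * `|s - t|) ->
  0 < e -> prokhorov_bound P d Y Z e ->
  `|fine (P [set w | g (X w, Y w) <= x]) - fine (P [set w | g (X w, Z w) <= x])|
    <= (1 + L) * K * e.
Proof.
move=> hY hZ indY indZ cdf_lip e0 bYZ.
have K0 : 0 <= K := le_trans ler01 K1.
have bZY := prokhorov_bound_sym hY hZ dsym dtri bYZ.
have mY t := measurable_le_event g_meas hX t hY indY.
have mZ t := measurable_le_event g_meas hX t hZ indZ.
have := fine_probability_leD (mY _) (mZ _)
  (prob_le_shift g_meas K0 g_lip dsym dtri hX x hY hZ indY indZ (ltW e0) bYZ).
have := prob_le_shift g_meas K0 g_lip dsym dtri hX (x + K * e) hZ hY indZ indY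
  (ltW e0) bZY.
rewrite addrK => /(fine_probability_leD (mZ _) (mY _)).
have Ke0 : 0 <= K * e := mulr_ge0 K0 (ltW e0).
have eKe : e <= K * e by rewrite ler_pMl.
move: (cdf_lip x (x - K * e)) (cdf_lip (x + K * e) x).
have -> : x - (x - K * e) = K * e by lra.
have -> : x + K * e - x = K * e by lra.
rewrite [`|K * e|]ger0_norm //.
move=> /ler_normlP[? ?] /ler_normlP[? ?] ? ?.
by apply/ler_normlP; split; rewrite -!mulrA mulrDl mul1r; lra.
Qed.

End cdf_gap.

Arguments cdf_gap_le {R dT T P S' S d' d g K} g_meas K1 g_lip dsym dtri {X} hX
  {Y Z L x e}.

Theorem corollary3p8 (R : realType) (dT : measure_display) (T : measurableType dT)
  (P : probability T R)
  (S : Type) (d : S -> S -> R) (S' : Type) (d' : S' -> S' -> R)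
  (hS : polish_space d) (hS' : polish_space d')
  (g : S' * S -> R) (K L : R)
  (g_meas : forall B : set R, measurable B -> borel_prod d' d (g @^-1` B))
  (g_lip : forall x y z, `|g (x, y) - g (x, z)| <= K * d y z)
  (X : T -> S') (Y Z : T -> S)
  (hX : random_var d' X) (hY : random_var d Y) (hZ : random_var d Z)
  (indXY : indep_rv P d' d X Y) (indXZ : indep_rv P d' d X Z)
  (cdf_lip : forall s t : R,
     `|fine (P [set w | g (X w, Y w) <= s]) - fine (P [set w | g (X w, Y w) <= t])|
       <= L * `|s - t|) :
  forall x : R,
    `|fine (P [set w | g (X w, Y w) <= x]) - fine (P [set w | g (X w, Z w) <= x])|
      <= (1 + L) * Num.max 1 K * prokhorov P d Y Z.
Proof.
move=> x; have [d0 [_ [dsym [dtri _]]]] := hS.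
have K1 : 1 <= Num.max 1 K by rewrite le_max lexx.
have g_lip_max y z w : `|g (y, z) - g (y, w)| <= Num.max 1 K * d z w.
  by apply: (le_trans (g_lip y z w)); rewrite ler_wpM2r // le_max lexx orbT.
have L0 : 0 <= L.
  by have := cdf_lip 1 0; rewrite subr0 normr1 mulr1; apply: le_trans.
apply: (prokhorov_ge hY); first by rewrite mulr_gt0 ?(lt_le_trans ltr01 K1) //; lra.
move=> e e0 bYZ.
exact: (cdf_gap_le g_meas K1 g_lip_max dsym dtri hX hY hZ indXY indXZ cdf_lip e0 bYZ).
Qed.
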